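(* Consider the averaged buck converter $-L\dot I=V-uV_s$, $C\dot V=I-GV$ with scalar constants $L>0$, $C>0$, $G\ge0$, $V_s\in\mathbb{R}$, extended by $\dot u=\upsilon$ (state $(I,V,\dot I,\dot V,u)$, input $\upsilon$). Then this system is passive with respect to the storage function $S=\tfrac12L\dot I^2+\tfrac12C\dot V^2$ and the port-variables $\dot u$ and $\dot IV_s$, i.e. $\dot S\le\dot u\,\dot IV_s$.
   Context: $I$ is the inductor current, $V$ the capacitor voltage, $u\in[0,1]$ the duty cycle (averaged model). *)

From Stdlib Require Import Reals Lra.
From Coquelicot Require Import Coquelicot.
Open Scope R_scope.

Definition storage (L C : R) (dI dV : R -> R) (t : R) : R :=
  / 2 * L * (dI t) ^ 2 + / 2 * C * (dV t) ^ 2.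

(* Differentiating the two constitutive equations gives
   -L dI' = dV - du Vs  and  C dV' = dI - G dV.  Hence
   dS/dt = L dI dI' + C dV dV' = du dI Vs - G dV^2: the exchange terms
   -dI dV and dV dI cancel, and the conductance only dissipates. *)
From Stdlib Require Import Reals Lra.
From Coquelicot Require Import Coquelicot.
Open Scope R_scope.

Lemma is_derive_scaled_eq (k : R) (f g : R -> R) (t dg : R) :
  k <> 0 -> (forall s, k * f s = g s) -> is_derive g t dg ->
  is_derive f t (dg / k).
Proof.
  intros Hk Hfg Hg.
  apply (is_derive_ext (fun s : R => / k * g s) f).
  - intro s. rewrite <- Hfg, <- Rmult_assoc, Rinv_l by exact Hk. apply Rmult_1_l.
  - unfold Rdiv. rewrite Rmult_comm. exact (is_derive_scal g t (/ k) dg Hg).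
Qed.

Lemma is_derive_storage (L C : R) (dI dV : R -> R) (t a b : R) :
  is_derive dI t a -> is_derive dV t b ->
  is_derive (storage L C dI dV) t (L * dI t * a + C * dV t * b).
Proof.
  intros Ha Hb.
  pose proof (is_derive_plus _ _ t _ _
    (is_derive_scal _ t (/ 2 * L) _ (is_derive_pow dI 2 t a Ha))
    (is_derive_scal _ t (/ 2 * C) _ (is_derive_pow dV 2 t b Hb))) as H.
  replace (L * dI t * a + C * dV t * b)
    with (plus (/ 2 * L * (INR 2 * a * dI t ^ pred 2))
               (/ 2 * C * (INR 2 * b * dV t ^ pred 2))).
  - exact H.
  - unfold plus; simpl. field.
Qed.

Lemma buck_storage_rate (L C G Vs dI dV du : R) :
  L <> 0 -> C <> 0 ->
  L * dI * ((dV - du * Vs) / - L) + C * dV * ((dI - G * dV) / C)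
  = du * (dI * Vs) - G * dV ^ 2.
Proof. intros HL HC. field. split; assumption. Qed.

Theorem lemma2 (L C G Vs : R) (I V u dI dV du : R -> R) :
  0 < L -> 0 < C -> 0 <= G ->
  (forall t, is_derive I t (dI t)) ->
  (forall t, is_derive V t (dV t)) ->
  (forall t, is_derive u t (du t)) ->
  (forall t, - L * dI t = V t - u t * Vs) ->
  (forall t, C * dV t = I t - G * V t) ->
  forall t, ex_derive (storage L C dI dV) t /\
            Derive (storage L C dI dV) t <= du t * (dI t * Vs).
Proof.
  intros HL HC HG hI hV hu inductor capacitor t.
  assert (HdI : is_derive dI t ((dV t - du t * Vs) / - L)).
  { apply (is_derive_scaled_eq (- L) dI (fun s => V s - u s * Vs)).
    - lra.
    - exact inductor.
    - apply (is_derive_minus V (fun s => u s * Vs)); [apply hV |].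
      apply (is_derive_scal_l u t (du t) Vs), hu. }
  assert (HdV : is_derive dV t ((dI t - G * dV t) / C)).
  { apply (is_derive_scaled_eq C dV (fun s => I s - G * V s)).
    - lra.
    - exact capacitor.
    - apply (is_derive_minus I (fun s => G * V s)); [apply hI |].
      apply is_derive_scal, hV. }
  pose proof (is_derive_storage L C dI dV t _ _ HdI HdV) as HS.
  split.
  - eexists; exact HS.
  - rewrite (is_derive_unique _ _ _ HS), buck_storage_rate by lra.
    nra.
Qed.
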